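(* There exists a function $f\in\bigcap_{\alpha\in(0,1)}C^{0,\alpha}([0,1])$ which does not have the strong Sard property, i.e. $\mathcal{L}^1(f(S))>0$, but has the relaxed Sard property, i.e. $f_\#(\mathbf{1}_S\mathcal{L}^1)\perp\mathcal{L}^1$, where $S$ is the critical set of $f$.
   Context: $C^{0,\alpha}([0,1])$ is the space of $\alpha$-Hölder continuous real functions on $[0,1]$. $\mathcal{L}^1$ denotes Lebesgue measure on $\mathbb{R}$, $\mathbf{1}_A$ the indicator function of $A$, $f_\#\mu$ the pushforward of the measure $\mu$ under $f$, and $\mu\perp\nu$ means mutual singularity. The critical set $S$ of $f$ is the set of all points $x\in[0,1]$ at which $f$ is either not differentiable or has $f'(x)=0$. *)

From mathcomp Require Import all_boot all_order all_algebra.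
From mathcomp Require Import all_classical all_reals all_analysis.
Set Implicit Arguments. Unset Strict Implicit. Unset Printing Implicit Defensive.
Import Order.TTheory GRing.Theory Num.Theory.
Import numFieldNormedType.Exports.
Local Open Scope classical_set_scope.
Local Open Scope ring_scope.

Definition holder_on01 {R : realType} (alpha : R) (f : R -> R) : Prop :=
  exists C : R, forall x y : R, x \in `[0, 1] -> y \in `[0, 1] ->
    `|f x - f y| <= C * (`|x - y| `^ alpha).

Definition critical_set {R : realType} (f : R -> R) : set R :=
  [set x | x \in `[0, 1] /\ (~ derivable f x 1 \/ derive1 f x = 0)].

(* the pushforward measure f_#(1_S L^1), B |-> L^1(S ∩ f^{-1}(B)) *)
Definition push_restr {R : realType} (f : R -> R) (S : set R) (B : set R)
  : \bar R := (@lebesgue_measure R) (S `&` f @^-1` B).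

Definition singular_wrt_lebesgue {R : realType} (mu : set R -> \bar R) : Prop :=
  exists N : set R, measurable (N : set (measurableTypeR R)) /\
    (@lebesgue_measure R) N = 0%E /\ mu (~` N) = 0%E.

From mathcomp Require Import all_boot all_order all_algebra.
From mathcomp Require Import all_classical all_reals all_analysis.
From mathcomp Require Import ring lra.
Set Implicit Arguments. Unset Strict Implicit. Unset Printing Implicit Defensive.
Import Order.TTheory GRing.Theory Num.Theory.
Import numFieldNormedType.Exports.
Local Open Scope classical_set_scope.
Local Open Scope ring_scope.

(* Let K be the Cantor set whose 2^m level-m cells have length 1/(2^m (m+1)),
   so that K is null, and let f be its Cantor function: f maps the k-th
   level-m cell onto [k/2^m, (k+1)/2^m] and is constant, with a dyadic value,
   on each gap.  Points closer than the level-m cell length have images closer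
   than 2/2^m; as that length is 2^-m up to the factor 1/(m+1), f is
   alpha-Hölder for every alpha < 1.  But f rises by 2^-m = (m+1) * length
   across every level-m cell, so f is differentiable at no point of K and
   K lies in the critical set S.  Hence f(S) contains f(K), which contains
   [0,1] minus the dyadics and has measure 1, while S minus f^-1(dyadics) lies
   in the null set K, so f_#(1_S L^1) is carried by the countable set of
   dyadics. *)

Lemma bernoulli_ineq (R : realDomainType) (x : R) (n : nat) :
  0 <= x -> 1 + x *+ n <= (1 + x) ^+ n.
Proof.
move=> x0; elim: n => [|n IH]; first by rewrite mulr0n addr0 expr0.
rewrite exprS mulrS.
have xn0 : 0 <= x *+ n by rewrite mulrn_wge0.
have := ler_wpM2l (addr_ge0 ler01 x0) IH.
have := mulr_ge0 x0 xn0.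
nra.
Qed.

Lemma natrS_mul_expr_bounded (R : realFieldType) (q : R) :
  0 < q < 1 -> exists B : R, forall n : nat, n.+1%:R * q ^+ n <= B.
Proof.
case/andP=> q0 q1; set x := q^-1 - 1.
have x0 : 0 < x by rewrite subr_gt0 invf_gt1.
set c := Num.min 1 x.
have c0 : 0 < c by rewrite lt_min ltr01 x0.
exists c^-1 => n.
have qn0 : 0 < q ^+ n := exprn_gt0 n q0.
have cn : c * n.+1%:R <= (q ^+ n)^-1.
  rewrite -exprVn (_ : q^-1 = 1 + x); last by rewrite /x addrC subrK.
  apply: le_trans (bernoulli_ineq n (ltW x0)).
  have c1 : c <= 1 by rewrite ge_min lexx.
  have cx : c <= x by rewrite ge_min lexx orbT.
  rewrite -natr1 -mulr_natr; have := ler0n R n; nra.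
rewrite -(ler_pM2l c0) mulrA mulfV ?gt_eqF //.
by rewrite -[leRHS](mulVf (lt0r_neq0 qn0)) ler_pM2r.
Qed.

Lemma chord_slope_split (R : realFieldType) (f : R -> R) (s a x b : R) :
  a <= x <= b -> a < b -> s * (b - a) <= f b - f a ->
  (x < b /\ s * (b - x) <= f b - f x) \/ (a < x /\ s * (x - a) <= f x - f a).
Proof.
case/andP=> ax xb ab steep.
have [xb'|bx] := ltrP x b; last first.
  by right; have -> : x = b by apply/eqP; rewrite eq_le xb bx.
have [right_steep|right_flat] := lerP (s * (b - x)) (f b - f x); first by left.
right; split; last by lra.
rewrite lt_neqAle ax andbT; apply/eqP => ax'.
by rewrite -ax' in right_flat; lra.
Qed.

Lemma not_derivable_steep_chords (R : realType) (f : R -> R) (x : R) :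
  (forall s d : R, 0 < s -> 0 < d -> exists a b : R,
     [/\ a <= x <= b, a < b, b - a < d & s * (b - a) <= f b - f a]) ->
  ~ derivable f x 1.
Proof.
move=> steep /cvg_ex [l /cvgrPdist_lt /(_ 1 ltr01)].
rewrite /dnbhs /within /= => /nbhs_ballP [d /= d0 near_l].
have slope_lt (h : R) : h != 0 -> `|h| < d -> (f (h + x) - f x) / h < `|l| + 1.
  move=> h0 hd; have := near_l h _ h0.
  rewrite /ball /= sub0r normrN => /(_ hd).
  rewrite /GRing.scale /= mulr1 mulrC => near.
  have := ler_norm ((f (h + x) - f x) / h - l); rewrite distrC.
  have := ler_norm l; lra.
have l1 : 0 < `|l| + 1 by rewrite ltr_pwDr.
have [a [b [axb ab bad steep_ab]]] := steep (`|l| + 1) d l1 d0.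
have [ax xb] := andP axb.
case: (chord_slope_split axb ab steep_ab) => [[xb' sl]|[ax' sl]].
- have hd : b - x < d by lra.
  have := slope_lt (b - x).
  rewrite subrK subr_eq0 gt_eqF // ger0_norm ?subr_ge0 ?ltW //.
  by rewrite ltr_pdivrMr ?subr_gt0 // => /(_ isT hd); lra.
- have hd : x - a < d by lra.
  have := slope_lt (a - x).
  rewrite subrK subr_eq0 lt_eqF // ler0_norm ?subr_le0 ?ltW // opprB.
  rewrite -[a - x]opprB invrN mulrN -mulNr opprB ltr_pdivrMr ?subr_gt0 //.
  by move=> /(_ isT hd); lra.
Qed.

Lemma outer_measure_setD_null (R : realType) (T : Type)
    (mu : {outer_measure set T -> \bar R}) (A N : set T) :
  mu N = 0%E -> mu (A `\` N) = mu A.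
Proof.
move=> N0; apply/eqP; rewrite eq_le le_outer_measure ?subDsetl //=.
have : (mu A <= mu ((A `\` N) `|` N))%E.
  by apply: le_outer_measure => x Ax; have [?|?] := pselect (N x); [right|left].
by move/le_trans; apply; rewrite -[leRHS]adde0 -N0 outer_measureU2.
Qed.

Section cantor.
Variable R : realType.

Definition cell_len (m : nat) : R := (2 ^+ m * m.+1%:R)^-1.

(* The level-[m] cell of index [k < 2 ^ m] is
   [[cell_lo m k, cell_lo m k + cell_len m]]; its children are the cells [2k]
   and [2k + 1] of level [m + 1], placed side by side at its left end, which
   leaves a gap since [2 * cell_len m.+1 < cell_len m]. *)
Fixpoint cell_lo (m k : nat) : R :=
  if m is m'.+1 then cell_lo m' k./2 + (if odd k then cell_len m else 0) else 0.

Definition dyadic (m k : nat) : R := k%:R / 2 ^+ m.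

Lemma cell_len_gt0 m : 0 < cell_len m.
Proof. by rewrite invr_gt0 mulr_gt0 ?exprn_gt0 ?ltr0n. Qed.

Lemma cell_len0 : cell_len 0 = 1.
Proof. by rewrite /cell_len expr0 mul1r invr1. Qed.

Lemma cell_lenS_le_half m : 2 * cell_len m.+1 <= cell_len m.
Proof.
have -> : 2 * cell_len m.+1 = (2 ^+ m * m.+2%:R)^-1.
  rewrite /cell_len exprS; field.
  by rewrite expf_neq0 // andbT; apply: lt0r_neq0; have := ler0n R m; lra.
rewrite lef_pV2 ?posrE ?mulr_gt0 ?exprn_gt0 ?ltr0n //.
by rewrite ler_pM2l ?exprn_gt0 // ler_nat.
Qed.

Lemma expr2V_le_invS n : (2 ^+ n)^-1 <= n.+1%:R^-1 :> R.
Proof.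
by rewrite lef_pV2 ?posrE ?exprn_gt0 ?ltr0n // -natrX ler_nat ltn_expl.
Qed.

Lemma cell_len_le_expr2V m : cell_len m <= (2 ^+ m)^-1.
Proof.
rewrite lef_pV2 ?posrE ?mulr_gt0 ?exprn_gt0 ?ltr0n //.
by rewrite ler_peMr ?exprn_ge0 // ler1n.
Qed.

Lemma exists_expr2V_lt (e : R) : 0 < e -> exists n, (2 ^+ n)^-1 < e.
Proof.
move=> e0; have [n] := ltr_add_invr e0; rewrite add0r => ne.
by exists n; apply: le_lt_trans ne; exact: expr2V_le_invS.
Qed.

Lemma cell_len_bracket (t : R) : 0 < t <= 1 ->
  exists m, cell_len m.+1 <= t <= cell_len m.
Proof.
case/andP=> t0 t1.
have small : exists n, cell_len n.+1 <= t.
  have [n nt] := exists_expr2V_lt t0; exists n.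
  have := cell_lenS_le_half n; have := cell_len_gt0 n.+1.
  have := cell_len_le_expr2V n; lra.
case: (ex_minnP small) => -[|n] lo min_n.
  by exists 0%N; rewrite lo cell_len0.
by exists n.+1; rewrite lo /= leNgt; apply/negP => /ltW /min_n; rewrite ltnn.
Qed.

Lemma cell_lo_ge0 m k : 0 <= cell_lo m k.
Proof.
elim: m k => [|m IH] k //=; apply: addr_ge0 => //.
by case: ifP => _ //; exact/ltW/cell_len_gt0.
Qed.

Lemma cell_lo_lift m r k : cell_lo (m + r) (k * 2 ^ r) = cell_lo m k.
Proof.
elim: r k => [|r IH] k; first by rewrite addn0 expn0 muln1.
have -> : (k * 2 ^ r.+1 = (k * 2 ^ r).*2)%N by rewrite expnS mulnCA mul2n.
by rewrite addnS /= half_double odd_double addr0 IH.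
Qed.

Lemma cell_lo_le_parent m r k :
  cell_lo (m + r) k + cell_len (m + r) <= cell_lo m (k %/ 2 ^ r) + cell_len m.
Proof.
elim: r k => [|r IH] k; first by rewrite addn0 expn0 divn1.
rewrite addnS /= expnS divnMA divn2.
have := IH k./2; have := cell_lenS_le_half (m + r).
have := cell_len_gt0 (m + r).+1; by case: ifP => _; lra.
Qed.

Lemma cell_lo_step m k : (k.+1 < 2 ^ m)%N ->
  cell_lo m k + cell_len m <= cell_lo m k.+1.
Proof.
elim: m k => [|m IH] k; first by rewrite expn0.
move=> km /=; rewrite uphalf_half.
have := odd_double_half k; case: (odd k) => /= kE; last by rewrite add0n addr0.
have km' : ((k./2).+1 < 2 ^ m)%N.
  by move: km; set j := k./2; rewrite -kE expnS mul2n add1n -doubleS ltn_double.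
have := IH _ km'; have := cell_lenS_le_half m; rewrite add1n addr0; lra.
Qed.

Lemma cell_lo_lt m k k' : (k < k')%N -> (k' < 2 ^ m)%N ->
  cell_lo m k + cell_len m <= cell_lo m k'.
Proof.
elim: k' => [|k' IH] //; rewrite ltnS leq_eqVlt => /orP[/eqP -> | kk'] k'm.
  exact: cell_lo_step.
have := IH kk' (ltnW k'm); have := cell_lo_step k'm.
have := cell_len_gt0 m; lra.
Qed.

Lemma dyadicS m k : dyadic m k.+1 = dyadic m k + (2 ^+ m)^-1.
Proof. by rewrite /dyadic -addn1 natrD mulrDl mul1r. Qed.

Lemma dyadic_lift m r k : dyadic (m + r) (k * 2 ^ r) = dyadic m k.
Proof. by rewrite /dyadic natrM natrX exprD; field; rewrite !expf_neq0. Qed.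

Lemma dyadic_ltE m k m' k' :
  (dyadic m k < dyadic m' k') = (k * 2 ^ m' < k' * 2 ^ m)%N.
Proof.
rewrite /dyadic ltr_pdivrMr ?exprn_gt0 // mulrAC ltr_pdivlMr ?exprn_gt0 //.
by rewrite -!natrX -!natrM ltr_nat.
Qed.

Lemma dyadic_lt1 m k : (dyadic m k < 1) = (k < 2 ^ m)%N.
Proof. by rewrite ltr_pdivrMr ?exprn_gt0 // mul1r -natrX ltr_nat. Qed.

Lemma dyadic_floor m (y : R) : 0 <= y ->
  exists k, dyadic m k <= y < dyadic m k.+1.
Proof.
move=> y0; exists (Num.truncn (2 ^+ m * y)).
rewrite /dyadic ler_pdivrMr ?ltr_pdivlMr ?exprn_gt0 // ![y * _]mulrC.
by rewrite truncn_le truncnS_gt mulr_ge0 ?exprn_ge0.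
Qed.

Lemma cell_lo_lt_dyadic m k m' k' : (k' < 2 ^ m')%N ->
  dyadic m k < dyadic m' k' -> cell_lo m k < cell_lo m' k'.
Proof.
move=> k'm'; rewrite dyadic_ltE => lt_kk'.
rewrite -(cell_lo_lift m m' k) -(cell_lo_lift m' m k') addnC.
have k'm : (k' * 2 ^ m < 2 ^ (m' + m))%N by rewrite expnD ltn_pmul2r ?expn_gt0.
have := cell_lo_lt lt_kk' k'm; have := cell_len_gt0 (m' + m); lra.
Qed.

Definition dyadics_left_of (x : R) : set R :=
  [set d | exists m k, [/\ (k < 2 ^ m)%N, cell_lo m k <= x & d = dyadic m k]].

Definition cantor_fun (x : R) : R := sup (dyadics_left_of x).

Lemma has_sup_dyadics_left_of x : 0 <= x -> has_sup (dyadics_left_of x).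
Proof.
move=> x0; split; first by exists (dyadic 0 0), 0%N, 0%N.
by exists 1 => _ [m [k [km _ ->]]]; rewrite ltW // dyadic_lt1.
Qed.

Lemma cantor_fun_ge_dyadic m k x : (k < 2 ^ m)%N ->
  cell_lo m k <= x -> dyadic m k <= cantor_fun x.
Proof.
move=> km lo_x; apply: sup_upper_bound; last by exists m, k.
exact/has_sup_dyadics_left_of/(le_trans (cell_lo_ge0 m k)).
Qed.

Lemma cantor_fun_le x y : 0 <= x ->
  (forall m k, (k < 2 ^ m)%N -> cell_lo m k <= x -> dyadic m k <= y) ->
  cantor_fun x <= y.
Proof.
move=> x0 ub; apply: ge_sup; first by exists (dyadic 0 0), 0%N, 0%N.
by move=> _ [m [k [km lo_x ->]]]; exact: ub.
Qed.

Lemma cantor_fun_gt_dyadic m k x : 0 <= x ->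
  dyadic m k < cantor_fun x -> cell_lo m k < x.
Proof.
move=> x0 lt_k; have e0 : 0 < cantor_fun x - dyadic m k by rewrite subr_gt0.
have [_ [m' [k' [k'm' lo_x ->]]]] :=
  sup_adherent e0 (has_sup_dyadics_left_of x0).
rewrite opprB addrCA subrr addr0 => lt_kk'.
exact: lt_le_trans (cell_lo_lt_dyadic k'm' lt_kk') lo_x.
Qed.

Lemma cantor_fun_ge0 x : 0 <= x -> 0 <= cantor_fun x.
Proof.
by move=> x0; have := @cantor_fun_ge_dyadic 0 0 x isT x0; rewrite /dyadic mul0r.
Qed.

Lemma cantor_fun_le1 x : 0 <= x -> cantor_fun x <= 1.
Proof.
by move=> x0; apply: cantor_fun_le => // m k km _; rewrite ltW ?dyadic_lt1.
Qed.

Lemma cantor_fun_nondecreasing x y : 0 <= x -> x <= y ->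
  cantor_fun x <= cantor_fun y.
Proof.
move=> x0 xy; apply: cantor_fun_le => // m k km lo_x.
exact: cantor_fun_ge_dyadic km (le_trans lo_x xy).
Qed.

Lemma cantor_fun_cell_lo m k : (k < 2 ^ m)%N ->
  cantor_fun (cell_lo m k) = dyadic m k.
Proof.
move=> km; apply/eqP; rewrite eq_le cantor_fun_ge_dyadic // andbT leNgt.
by apply/negP => /(cantor_fun_gt_dyadic (cell_lo_ge0 m k)); rewrite ltxx.
Qed.

(* The last level-[m + r] subcell of the cell already reaches the dyadic
   [dyadic m k.+1 - 2 ^- (m + r)]. *)
Lemma cantor_fun_cell_hi m k : (k < 2 ^ m)%N ->
  dyadic m k.+1 <= cantor_fun (cell_lo m k + cell_len m).
Proof.
move=> km; apply/ler_addgt0Pr => e e0.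
have [r re] := exists_expr2V_lt e0.
have r0 : (0 < 2 ^ r)%N by rewrite expn_gt0.
set k' := (k * 2 ^ r + (2 ^ r).-1)%N.
have k'S : k'.+1 = (k.+1 * 2 ^ r)%N by rewrite /k' -addnS prednK // mulSnr.
have k'_parent : (k' %/ 2 ^ r = k)%N.
  by rewrite /k' divnMDl // divn_small ?addn0 // prednK.
have k'mr : (k' < 2 ^ (m + r))%N.
  by rewrite -ltnS k'S expnD ltnS leq_pmul2r.
have lo_k' : cell_lo (m + r) k' <= cell_lo m k + cell_len m.
  have := cell_lo_le_parent m r k'; rewrite k'_parent.
  have := cell_len_gt0 (m + r); lra.
have := cantor_fun_ge_dyadic k'mr lo_k'.
rewrite -(dyadic_lift m r k.+1) -k'S dyadicS.
have : (2 ^+ (m + r))^-1 <= (2 ^+ r)^-1 :> R.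
  rewrite lef_pV2 ?posrE ?exprn_gt0 // exprD ler_peMl ?exprn_gt0 //.
  by rewrite exprn_ege1 // ler1n.
lra.
Qed.

Lemma cantor_fun0 : cantor_fun 0 = 0.
Proof. by rewrite (@cantor_fun_cell_lo 0 0) // /dyadic mul0r. Qed.

Lemma cantor_fun1 : cantor_fun 1 = 1.
Proof.
apply/eqP; rewrite eq_le cantor_fun_le1 //=.
have := @cantor_fun_cell_hi 0 0 isT.
by rewrite /= cell_len0 add0r /dyadic expr0 divr1.
Qed.

(* If [cantor_fun] rose by more than [2 / 2 ^+ m] from [u] to [v], two
   consecutive level-[m] dyadics would lie strictly between the values, and
   the level-[m] cell between them would lie strictly between [u] and [v]. *)
Lemma cantor_fun_modulus m u v : 0 <= u -> 0 <= v ->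
  `|u - v| <= cell_len m -> `|cantor_fun u - cantor_fun v| <= 2 / 2 ^+ m.
Proof.
suff rise : forall u v, 0 <= u -> 0 <= v -> v - u <= cell_len m ->
    cantor_fun v - cantor_fun u <= 2 / 2 ^+ m.
  move=> u0 v0; rewrite !ler_norml => /andP[vu uv].
  have : cantor_fun v - cantor_fun u <= 2 / 2 ^+ m by apply: rise => //; lra.
  have : cantor_fun u - cantor_fun v <= 2 / 2 ^+ m by apply: rise => //; lra.
  lra.
move=> {}u {}v u0 v0 vu; rewrite leNgt; apply/negP => steep.
have [k /andP[le_k lt_k]] := dyadic_floor m (cantor_fun_ge0 u0).
have lt_k2 : dyadic m k.+2 < cantor_fun v by rewrite !dyadicS; lra.
have k2m : (k.+2 < 2 ^ m)%N.
  by rewrite -dyadic_lt1; exact: lt_le_trans lt_k2 (cantor_fun_le1 v0).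
have lo_v : cell_lo m k.+2 < v := cantor_fun_gt_dyadic v0 lt_k2.
have lo_u : u < cell_lo m k.+1.
  rewrite ltNge; apply/negP => /(cantor_fun_ge_dyadic (ltnW k2m)); lra.
have := cell_lo_step k2m; lra.
Qed.

Lemma cantor_fun_continuous : {within `[0, 1], continuous cantor_fun}.
Proof.
apply/subspace_continuousP => x /= x01.
have [x0 _] := andP x01.
apply/cvgrPdist_lt => e e0; rewrite near_withinE.
have [m me] := exists_expr2V_lt (divr_gt0 e0 (ltr0n R 2)).
apply/nbhs_ballP; exists (cell_len m); first exact: cell_len_gt0.
move=> y /= /ltW xy /andP[y0 _].
have := cantor_fun_modulus x0 y0 xy; lra.
Qed.

Lemma expr2V_le_cell_len_powR (a : R) : 0 < a < 1 ->
  exists2 C : R, 0 < C & forall m, (2 ^+ m)^-1 <= C * cell_len m `^ a.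
Proof.
case/andP=> a0 a1; set q : R := 2^-1 `^ (1 - a).
have half0 : (0 : R) <= 2^-1 by rewrite invr_ge0 ler0n.
have q0 : 0 < q by rewrite powR_gt0 // invr_gt0.
have q1 : q < 1.
  have : q < 1 `^ (1 - a).
    by rewrite gt0_ltr_powR ?nnegrE ?subr_gt0 ?ler01 // invf_lt1 // ltr1n.
  by rewrite powR1.
have [B bound] := natrS_mul_expr_bounded (andb_true_intro (conj q0 q1)).
have B0 : 0 < B by apply: lt_le_trans (bound 0%N); rewrite expr0 mulr1 ltr0n.
exists B => // m; set h : R := (2 ^+ m)^-1.
have h0 : 0 < h by rewrite invr_gt0 exprn_gt0.
have h_split : h = h `^ a * h `^ (1 - a).
  rewrite -powRD; last by apply/implyP => _; rewrite gt_eqF.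
  by rewrite addrC subrK powRr1 // ltW.
have hq : h `^ (1 - a) = q ^+ m.
  rewrite /h -exprVn -(powR_mulrn m half0) powRAC.
  by rewrite powR_mulrn ?powR_ge0.
have ha : h `^ a <= m.+1%:R * cell_len m `^ a.
  have -> : h = cell_len m * m.+1%:R.
    by rewrite /h /cell_len invfM mulrVK // unitfE pnatr_eq0.
  rewrite (powRM _ (ltW (cell_len_gt0 m)) (ler0n _ _)) mulrC.
  rewrite ler_pM2r ?powR_gt0 ?cell_len_gt0 //.
  by rewrite ler1_powR ?ler1n // ltW.
rewrite h_split hq; apply: le_trans (ler_wpM2r (exprn_ge0 m (ltW q0)) ha) _.
by rewrite mulrAC; exact: (ler_wpM2r (powR_ge0 _ _) (bound m)).
Qed.

Lemma cantor_fun_holder (a : R) : 0 < a < 1 -> holder_on01 a cantor_fun.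
Proof.
move=> a01; have [C C0 expr2V_le] := expr2V_le_cell_len_powR a01.
exists (4 * C) => x y; rewrite !in_itv /= => /andP[x0 x1] /andP[y0 y1].
have [->|xy] := eqVneq x y.
  by rewrite !subrr normr0 mulr_ge0 ?powR_ge0 // mulr_ge0 // ltW.
have [m /andP[lo hi]] : exists m, cell_len m.+1 <= `|x - y| <= cell_len m.
  by apply: cell_len_bracket; rewrite normr_gt0 subr_eq0 xy /= ler_norml; lra.
apply: le_trans (cantor_fun_modulus x0 y0 hi) _.
have -> : 2 / 2 ^+ m = 4 * (2 ^+ m.+1)^-1 :> R.
  by rewrite exprS; field; rewrite expf_neq0.
have : C * cell_len m.+1 `^ a <= C * `|x - y| `^ a.
  rewrite ler_pM2l //; apply: ge0_ler_powR; rewrite ?nnegrE //.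
  - by case/andP: a01 => /ltW.
  - exact/ltW/cell_len_gt0.
have := expr2V_le m.+1; lra.
Qed.

Definition cantor_set : set R := [set x | forall m, exists2 k,
  (k < 2 ^ m)%N & cell_lo m k <= x <= cell_lo m k + cell_len m].

Lemma cantor_set_sub01 : cantor_set `<=` `[0, 1].
Proof.
move=> x /(_ 0%N) [k]; rewrite expn0 ltnS leqn0 => /eqP -> /=.
by rewrite cell_len0 add0r in_itv.
Qed.

Lemma cantor_fun_not_derivable x : cantor_set x -> ~ derivable cantor_fun x 1.
Proof.
move=> Kx; apply: not_derivable_steep_chords => s d s0 d0.
have min0 : 0 < Num.min d s^-1 by rewrite lt_min d0 invr_gt0.
have [m] := ltr_add_invr min0.
rewrite add0r lt_min => /andP[md ms].
have sm : s <= m.+1%:R by rewrite -lef_pV2 ?posrE ?ltr0n // ltW.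
have [k km /andP[lo_x x_hi]] := Kx m.
have len : cell_lo m k + cell_len m - cell_lo m k = cell_len m.
  by rewrite addrC addKr.
exists (cell_lo m k), (cell_lo m k + cell_len m); rewrite len; split.
- by rewrite lo_x x_hi.
- by rewrite ltrDl cell_len_gt0.
- apply: le_lt_trans (cell_len_le_expr2V m) _.
  exact: le_lt_trans (expr2V_le_invS m) md.
- rewrite (cantor_fun_cell_lo km).
  have := cantor_fun_cell_hi km; rewrite dyadicS.
  have -> : (2 ^+ m)^-1 = m.+1%:R * cell_len m.
    by rewrite /cell_len invfM mulrCA mulfV ?mulr1 // pnatr_eq0.
  have := ler_wpM2r (ltW (cell_len_gt0 m)) sm; lra.
Qed.

Lemma cantor_set_sub_critical : cantor_set `<=` critical_set cantor_fun.
Proof.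
move=> x Kx; split; first exact: cantor_set_sub01.
by left; exact: cantor_fun_not_derivable.
Qed.

Definition dyadics : set R := [set dyadic mk.1 mk.2 | mk in [set: nat * nat]].

Lemma countable_dyadics : countable dyadics.
Proof. exact: sub_countable (card_image_le _ _) (countableP _). Qed.

(* Contrapositively: on each gap of the Cantor set, [cantor_fun] is constant
   with a dyadic value. *)
Lemma cantor_fun_nondyadic x : x \in `[0, 1] -> ~ dyadics (cantor_fun x) ->
  cantor_set x.
Proof.
rewrite in_itv /= => /andP[x0 _] nondyadic m.
have [k /andP[le_k lt_k]] := dyadic_floor m (cantor_fun_ge0 x0).
have lt_k' : dyadic m k < cantor_fun x.
  rewrite lt_neqAle le_k andbT; apply/eqP => eq_k.
  by apply: nondyadic; exists (m, k).
have km : (k < 2 ^ m)%N.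
  by rewrite -dyadic_lt1; exact: lt_le_trans lt_k' (cantor_fun_le1 x0).
exists k => //; rewrite (ltW (cantor_fun_gt_dyadic x0 lt_k')) /= leNgt.
apply/negP => /ltW hi_x.
have hi0 : 0 <= cell_lo m k + cell_len m.
  by rewrite addr_ge0 ?cell_lo_ge0 ?ltW ?cell_len_gt0.
have := cantor_fun_nondecreasing hi0 hi_x.
have := cantor_fun_cell_hi km; lra.
Qed.

Local Notation mu := (@lebesgue_measure R).

Lemma cantor_set_null : mu cantor_set = 0%E.
Proof.
apply/eqP; rewrite eq_le measure_ge0 andbT; apply/lee_addgt0Pr => e e0.
have [m] := ltr_add_invr e0; rewrite add0r add0e => me.
pose cell k : set R := `[cell_lo m k, cell_lo m k + cell_len m]%classic.
have cover : cantor_set `<=` \big[setU/set0]_(k < 2 ^ m) cell k.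
  move=> x /(_ m) [k km xk]; rewrite -bigcup_mkord.
  by exists k => //; rewrite /cell /= in_itv.
have cells :
    (\sum_(k < 2 ^ m) mu (cell k) = \sum_(k < 2 ^ m) (cell_len m)%:E)%E.
  apply: eq_bigr => k _; rewrite /cell lebesgue_measure_itv /= lte_fin ltrDl.
  by rewrite cell_len_gt0 -EFinD addrAC subrr add0r.
apply: (le_trans (le_outer_measure mu _ _ cover)).
apply: (le_trans (outer_measure_subadditive mu cell _)); rewrite cells.
rewrite sumEFin sumr_const card_ord lee_fin -mulr_natr natrX /cell_len invfM.
by rewrite mulrAC mulVf ?mul1r ?expf_neq0 // ltW.
Qed.

Lemma nondyadic01_sub_image : `[0, 1] `\` dyadics `<=` cantor_fun @` cantor_set.
Proof.
move=> y [/= /[!in_itv] /= /andP[y0 y1] nondyadic].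
have [x x01 fx] : exists2 x, x \in `[0, 1] & cantor_fun x = y.
  apply: IVT; [exact: ler01 | exact: cantor_fun_continuous |].
  by rewrite cantor_fun0 cantor_fun1 ge_min le_max y0 y1 orbT.
by rewrite -fx in nondyadic; exists x => //; exact: cantor_fun_nondyadic.
Qed.

Lemma cantor_fun_image_critical_gt0 :
  (0 < mu (cantor_fun @` critical_set cantor_fun))%E.
Proof.
have crit := image_subset cantor_fun cantor_set_sub_critical.
have := le_outer_measure mu _ _ (subset_trans nondyadic01_sub_image crit).
rewrite outer_measure_setD_null; last first.
  exact: countable_lebesgue_measure0 countable_dyadics.
apply: lt_le_trans; have : (0 < mu `[0%R, 1%R]%classic)%E.
  by rewrite lebesgue_measure_itv /= lte_fin ltr01 /= sube0 lte_fin ltr01.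
by [].
Qed.

Lemma cantor_fun_push_singular :
  singular_wrt_lebesgue (push_restr cantor_fun (critical_set cantor_fun)).
Proof.
exists dyadics; split.
  by apply: countable_measurable countable_dyadics => t; exact: measurable_set1.
split; first exact: countable_lebesgue_measure0 countable_dyadics.
apply/eqP; rewrite eq_le measure_ge0 andbT -cantor_set_null.
apply: le_outer_measure => x [[x01 _] nondyadic].
exact: cantor_fun_nondyadic.
Qed.

End cantor.

Theorem theorem4 (R : realType) :
  exists f : R -> R,
    (forall alpha : R, 0 < alpha < 1 -> holder_on01 alpha f) /\
    (0 < (@lebesgue_measure R) (f @` critical_set f))%E /\
    singular_wrt_lebesgue (push_restr f (critical_set f)).
Proof.
exists (@cantor_fun R); split; first exact: cantor_fun_holder.
split; [exact: cantor_fun_image_critical_gt0 | exact: cantor_fun_push_singular].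
Qed.
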